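(* Let $\boldsymbol{G}\in\{0,1\}^{r\times m}$ with $r\le m$, let $p=\min\{\lfloor m/2\rfloor, r\}$, and let $q$ be a prime power with $q\ge\binom{m}{p}$. Let $\boldsymbol{H}\in\mathbb{F}_q^{r\times m}$ be the output of any execution of the MCD algorithm on $(\boldsymbol{G},q)$. Then for every $k\in[r]$ and every $L\subseteq[m]$, the submatrix $\boldsymbol{H}_{[k]}^{L}$ reaches its maximum possible rank, i.e. $$\mathrm{rank}\,\boldsymbol{H}_{[k]}^{L}=\max\{\mathrm{rank}\,\boldsymbol{H}'^{L}_{[k]}:\ \boldsymbol{H}'\in\mathbb{F}_q^{r\times m}\text{ fits }\boldsymbol{G}\}.$$
   Context: $\boldsymbol{H}$ fits $\boldsymbol{G}$ if $h_{k,i}=0$ whenever $g_{k,i}=0$. $\boldsymbol{H}_{[k]}$ is the submatrix of the first $k$ rows and $\boldsymbol{H}_{[k]}^{L}$ its submatrix with columns in $L$. For a matrix with columns indexed by $[m]$, a set $S\subseteq[m]$ is independent if the columns indexed by $S$ are linearly independent, dependent otherwise, and a circuit if it is dependent but every proper subset is independent. Veto sets: let $2\le k\le r$, $i\in L\subseteq[m]$, and suppose all entries of $\boldsymbol{H}_{[k]}^{L}$ other than $h_{k,i}$ are fixed. For a circuit $C$ of $\boldsymbol{H}_{[k-1]}$ with $i\in C\subseteq L$, the column of $\boldsymbol{H}_{[k-1]}$ indexed by $i$ is a unique linear combination $\sum_{j\in C\setminus\{i\}} f_j\,(\text{column } j \text{ of } \boldsymbol{H}_{[k-1]})$; its veto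 value is $c(C)=\sum_{j\in C\setminus\{i\}} f_j h_{k,j}$ (so $c(\{i\})=0$). The veto set is $Z_{k,i}^{L}=\{c(L'\cup\{i\}): L'\subseteq L\setminus\{i\},\ L'\cup\{i\}\text{ a circuit of }\boldsymbol{H}_{[k-1]}\}$. MCD algorithm on $(\boldsymbol{G},q)$, with $G_k=\{i: g_{k,i}=1\}$: set $h_{k,i}=0$ whenever $g_{k,i}=0$; set $h_{1,i}=1$ for $i\in G_1$; for $k=2,\dots,r$: let $R=G_k$; while $R\ne\emptyset$: pick any $i\in R$, set $R\leftarrow R\setminus\{i\}$ and $L=[m]\setminus R$, compute $Z_{k,i}^{L}$ from the current entries (all entries of $\boldsymbol{H}_{[k]}^{L}$ except $h_{k,i}$ are fixed at this point), and set $h_{k,i}$ to an arbitrary element of $\mathbb{F}_q\setminus Z_{k,i}^{L}$. *)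

From mathcomp Require Import all_boot all_order all_algebra all_field.
Set Implicit Arguments. Unset Strict Implicit. Unset Printing Implicit Defensive.
Import GRing.Theory.
Local Open Scope ring_scope.

Section MCD.
Variable F : fieldType.

Definition fits (r m : nat) (G : 'M[bool]_(r, m)) (H : 'M[F]_(r, m)) : bool :=
  [forall k, forall i, ~~ G k i ==> (H k i == 0)].

(* H_[k]^L : first k rows, columns in L (in increasing order). *)
Definition subH (r m k : nat) (hk : (k <= r)%N) (H : 'M[F]_(r, m))
    (L : {set 'I_m}) : 'M[F]_(k, #|L|) :=
  \matrix_(i < k, j < #|L|) H (widen_ord hk i) (enum_val j).

Definition topH (r m k : nat) (hk : (k <= r)%N) (H : 'M[F]_(r, m)) : 'M[F]_(k, m) :=
  \matrix_(i < k, j < m) H (widen_ord hk i) j.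

Definition col_indep (n m : nat) (M : 'M[F]_(n, m)) (S : {set 'I_m}) : Prop :=
  forall a : 'I_m -> F, \sum_(j in S) a j *: col j M = 0 ->
    forall j, j \in S -> a j = 0.

Definition col_dep (n m : nat) (M : 'M[F]_(n, m)) (S : {set 'I_m}) : Prop :=
  ~ col_indep M S.

Definition circuit (n m : nat) (M : 'M[F]_(n, m)) (S : {set 'I_m}) : Prop :=
  col_dep M S /\ forall T : {set 'I_m}, T \proper S -> col_indep M T.

(* z \in Z_{k,i}^L, for 0-based row index k (paper's row k+1), so that
   H_[k-1] of the paper is the matrix of the first k rows (0-based < k),
   and h_{k,j} of the paper is H k j here. The veto value c(L' ∪ {i}) is
   \sum_{j in L'} f_j h_{k,j} where col_i = \sum_{j in L'} f_j col_j
   (f unique because L' ∪ {i} is a circuit). *)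
Definition veto (r m : nat) (H : 'M[F]_(r, m)) (k : 'I_r) (i : 'I_m)
    (L : {set 'I_m}) (z : F) : Prop :=
  let M := topH (ltnW (ltn_ord k)) H in
  exists L' : {set 'I_m},
    [/\ L' \subset L :\ i, circuit M (i |: L') &
      exists f : 'I_m -> F,
        col i M = \sum_(j in L') f j *: col j M /\
        z = \sum_(j in L') f j * H k j].

(* H is the output of some execution of the MCD algorithm on (G, q),
   q = #|F|.  For every row k >= 2 (0-based k >= 1), the execution processes
   G_k in some order s; when i is processed, R is the set of elements of s
   after i, L = [m] \ R, and h_{k,i} must avoid Z_{k,i}^L. *)
Definition MCD_output (r m : nat) (G : 'M[bool]_(r, m)) (H : 'M[F]_(r, m)) : Prop :=
  [/\ forall k i, G k i = false -> H k i = 0,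
      forall (k : 'I_r) i, nat_of_ord k = 0%N -> G k i = true -> H k i = 1 &
      forall k : 'I_r, (0 < k)%N ->
        exists s : seq 'I_m,
          [/\ uniq s, forall i, (i \in s) = G k i &
              forall i, i \in s ->
                ~ veto H k i (~: [set x | x \in drop (index i s).+1 s]) (H k i)]].

End MCD.

(* Let rho(k, L) be the largest rank of H'_[k]^L over the H' fitting G; it
   grows by at most one when a row or a column is added, and not at all when
   the new row of G vanishes on L.  If row k of
   H_[k]^L is independent of the rows above it, or if the column i of L that
   the algorithm processed last in row k is independent of the other columns
   of H_[k]^L, the rank of H_[k]^L keeps pace with rho.  Otherwise a minimal
   set of columns of L spanning column i of H_[k-1] is a circuit, and the
   row dependency turns its veto value into h_{k,i}, which the algorithm
   avoided.  The bound on q only guarantees that the algorithm can always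
   avoid the veto sets; optimality of its output does not need it. *)

From mathcomp Require Import all_boot all_order all_algebra all_field.
Set Implicit Arguments. Unset Strict Implicit. Unset Printing Implicit Defensive.
Import GRing.Theory.
Local Open Scope ring_scope.

Section RowMask.
Variable F : fieldType.

Definition mask n (S : {set 'I_n}) : 'M[F]_n := diag_mx (\row_j (j \in S)%:R).

Lemma row_mask_mul n p (S : {set 'I_n}) (Y : 'M[F]_(n, p)) a :
  row a (mask S *m Y) = (a \in S)%:R *: row a Y.
Proof. by rewrite row_mul row_diag_mx mxE -scalemxAl -rowE. Qed.

Lemma mul_mask_mxE n p (A : 'M[F]_(p, n)) (S : {set 'I_n}) a j :
  (A *m mask S) a j = A a j * (j \in S)%:R.
Proof. by rewrite mul_mx_diag !mxE. Qed.

Lemma mask_mul_mxE n p (S : {set 'I_n}) (A : 'M[F]_(n, p)) a j :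
  (mask S *m A) a j = (a \in S)%:R * A a j.
Proof. by rewrite mul_diag_mx !mxE. Qed.

Lemma trmx_mask n (S : {set 'I_n}) : (mask S)^T = mask S.
Proof. exact: tr_diag_mx. Qed.

Lemma mask0 n : mask (set0 : {set 'I_n}) = 0.
Proof. by apply/matrixP => a b; rewrite !mxE in_set0 mul0rn. Qed.

Lemma row_sub_mask_mul n p (S : {set 'I_n}) (Y : 'M[F]_(n, p)) a :
  a \in S -> (row a Y <= mask S *m Y)%MS.
Proof. by move=> aS; have := row_sub a (mask S *m Y); rewrite row_mask_mul aS scale1r. Qed.

Lemma mask_mul_subP n p (S : {set 'I_n}) (Y : 'M[F]_(n, p)) q (B : 'M[F]_(q, p)) :
  reflect (forall a, a \in S -> (row a Y <= B)%MS) (mask S *m Y <= B)%MS.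
Proof.
apply: (iffP idP) => [sSB a aS | sYB].
  exact: submx_trans (row_sub_mask_mul Y aS) sSB.
apply/row_subP => a; rewrite row_mask_mul.
by case: (boolP (a \in S)) => aS; rewrite ?scale1r ?sYB // scale0r sub0mx.
Qed.

Lemma mask_mulS n p (S T : {set 'I_n}) (Y : 'M[F]_(n, p)) :
  S \subset T -> (mask S *m Y <= mask T *m Y)%MS.
Proof. by move=> /subsetP sST; apply/mask_mul_subP => a /sST; apply: row_sub_mask_mul. Qed.

Lemma mask_mul_setU1_sub n p (S : {set 'I_n}) (Y : 'M[F]_(n, p)) i :
  (mask (i |: S) *m Y <= mask S *m Y + row i Y)%MS.
Proof.
apply/mask_mul_subP => a; rewrite in_setU1 => /predU1P[-> | aS].
  exact: addsmxSr.
exact: submx_trans (row_sub_mask_mul Y aS) (addsmxSl _ _).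
Qed.

Lemma mxrank_mask_setU1 n p (S : {set 'I_n}) (Y : 'M[F]_(n, p)) i :
  (\rank (mask (i |: S) *m Y) <= \rank (mask S *m Y) + \rank (row i Y))%N.
Proof.
apply: leq_trans (mxrankS (mask_mul_setU1_sub S Y i)) _.
exact: mxrank_adds_leqif.
Qed.

Lemma mxrank_mask_setU1_le n p (S : {set 'I_n}) (Y : 'M[F]_(n, p)) i :
  (\rank (mask (i |: S) *m Y) <= (\rank (mask S *m Y)).+1)%N.
Proof.
apply: leq_trans (mxrank_mask_setU1 S Y i) _.
by rewrite -[X in (_ <= X)%N]addn1 leq_add2l rank_leq_row.
Qed.

Lemma mxrank_mask_setU1_ltn n p (S : {set 'I_n}) (Y : 'M[F]_(n, p)) i :
  ~~ (row i Y <= mask S *m Y)%MS ->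
  (\rank (mask S *m Y) < \rank (mask (i |: S) *m Y))%N.
Proof.
move=> iSY; apply: rank_ltmx; rewrite ltmxE mask_mulS ?subsetUr //=.
by apply: contra iSY; apply: submx_trans (row_sub_mask_mul Y (setU11 i S)).
Qed.

Lemma row_sub_mask_mulP n p (S : {set 'I_n}) (Y : 'M[F]_(n, p)) i :
  reflect (exists w : 'I_n -> F, row i Y = \sum_(a in S) w a *: row a Y)
          (row i Y <= mask S *m Y)%MS.
Proof.
apply: (iffP idP) => [/submxP[D ->] | [w ->]]; last first.
  by apply: summx_sub => a aS; apply/scalemx_sub/row_sub_mask_mul.
exists (fun a => D 0 a); rewrite mulmxA mulmx_sum_row (bigID (mem S)) /=.
rewrite [X in _ + X]big1 ?addr0 => [|a /negPf aS]; last first.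
  by rewrite mul_mask_mxE aS mulr0 scale0r.
by apply: eq_bigr => a aS; rewrite mul_mask_mxE aS mulr1.
Qed.

Lemma row_sub_mask_mul_entries n p (S : {set 'I_n}) (Y : 'M[F]_(n, p)) i :
  (row i Y <= mask S *m Y)%MS ->
  exists w : 'I_n -> F, forall j, Y i j = \sum_(a in S) w a * Y a j.
Proof.
case/row_sub_mask_mulP => w /rowP eYw; exists w => j.
by have := eYw j; rewrite !mxE summxE => ->; apply: eq_bigr => a _; rewrite !mxE.
Qed.

Lemma mxrank_rowsub_mask n p q (S : {set 'I_n}) (f : 'I_q -> 'I_n) (W : 'M[F]_(n, p)) :
  (forall l, f l \in S) -> (forall a, a \in S -> exists l, f l = a) ->
  \rank (rowsub f W) = \rank (mask S *m W).
Proof.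
move=> fS Sf; apply/eqP; rewrite eqn_leq; apply/andP; split; apply: mxrankS.
  by apply/row_subP => l; rewrite row_rowsub row_sub_mask_mul.
by apply/mask_mul_subP => a /Sf[l <-]; rewrite -(row_rowsub f W l) row_sub.
Qed.

End RowMask.

Arguments mask {F n} S.

Section Circuits.
Variables (F : fieldType) (n m : nat) (M : 'M[F]_(n, m)).

Lemma trmx_col_comb (S : {set 'I_m}) (a : 'I_m -> F) :
  (\sum_(j in S) a j *: col j M)^T = \sum_(j in S) a j *: row j M^T.
Proof.
by apply/matrixP => u v; rewrite !(mxE, summxE); apply: eq_bigr => j _; rewrite !mxE.
Qed.

Lemma col_indep_rows (S : {set 'I_m}) :
  col_indep M S <->
  (forall a, \sum_(j in S) a j *: row j M^T = 0 -> forall j, j \in S -> a j = 0).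
Proof.
split=> indS a.
  by rewrite -trmx_col_comb => /(congr1 trmx); rewrite trmxK trmx0; apply: indS.
by move=> /(congr1 trmx); rewrite trmx_col_comb trmx0; apply: indS.
Qed.

Lemma row_sub_of_dependency (U : {set 'I_m}) (a : 'I_m -> F) x :
  \sum_(j in U) a j *: row j M^T = 0 -> x \in U -> a x != 0 ->
  (row x M^T <= mask (U :\ x) *m M^T)%MS.
Proof.
move=> + xU ax0; rewrite (big_setD1 x xU) /= => /eqP; rewrite addr_eq0 => /eqP eax.
apply/row_sub_mask_mulP; exists (fun j => - (a x)^-1 * a j).
rewrite -[row x _](scalerK ax0) eax scalerN -scaleNr scaler_sumr.
by apply: eq_bigr => j _; rewrite scalerA.
Qed.

Variable i : 'I_m.

Definition spans_col (T : {set 'I_m}) := (row i M^T <= mask T *m M^T)%MS.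

(* Minimality rules out both kinds of dependency inside a proper subset U of
   [i |: T]: one using column i shrinks T to [U :\ i], one avoiding it lets
   some column j0 of T be dropped. *)
Lemma circuit_of_minset_spans_col (T : {set 'I_m}) :
  minset spans_col T -> i \notin T -> circuit M (i |: T).
Proof.
case/minsetP => spanT minT iT; split=> [indep | U ltU].
  have [f ef] := row_sub_mask_mulP _ _ _ spanT.
  suff /eqP : (-1 : F) = 0 by rewrite oppr_eq0 oner_eq0.
  have := proj1 (col_indep_rows _) indep (fun j => if j == i then -1 else f j).
  move=> /(_ _ i (setU11 i T)); rewrite eqxx; apply.
  rewrite big_setU1 //= eqxx scaleN1r ef addrC -sumrB big1 // => j jT.
  by rewrite ifN ?subrr //; apply: contraNneq iT => <-.
apply/col_indep_rows => a sum0 j0 j0U; apply/eqP/negPn/negP => aj0.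
have sUiT : U :\ i \subset T.
  by apply/subsetP => j; rewrite in_setD1 => /andP[ji /(subsetP (proper_sub ltU))];
    rewrite in_setU1 (negPf ji).
case: (boolP ((i \in U) && (a i != 0))) => [/andP[iU ai0] | noi].
  have eUi := minT _ (row_sub_of_dependency sum0 iU ai0) sUiT.
  by move: ltU; rewrite -eUi setD1K // properxx.
have sum0' : \sum_(j in U :\ i) a j *: row j M^T = 0.
  rewrite -[RHS]sum0 [RHS](bigID (pred1 i)) /= [X in _ = X + _]big1 ?add0r
    => [|j /andP[jU /eqP ji]]; last first.
    by move: noi; rewrite -ji jU /= negbK => /eqP ->; rewrite scale0r.
  by apply: eq_bigl => j; rewrite in_setD1 andbC.
have j0Ui : j0 \in U :\ i.
  rewrite in_setD1 j0U andbT; apply: contraNneq noi => <-.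
  by rewrite j0U aj0.
have j0T : j0 \in T := subsetP sUiT j0 j0Ui.
have : spans_col (T :\ j0).
  apply: submx_trans spanT _; rewrite -{1}(setD1K j0T).
  apply: submx_trans (mask_mul_setU1_sub _ _ _) _; rewrite addsmx_sub submx_refl /=.
  apply: submx_trans (row_sub_of_dependency sum0' j0Ui aj0) _.
  by apply: mask_mulS; rewrite setSD.
by move=> /minT /(_ (subD1set T j0)) eT; rewrite -eT setD11 in j0T.
Qed.

Lemma circuit_of_dependency (S : {set 'I_m}) (f : 'I_m -> F) :
  i \notin S -> col i M = \sum_(j in S) f j *: col j M ->
  exists L' : {set 'I_m}, [/\ L' \subset S, circuit M (i |: L') &
              exists f', col i M = \sum_(j in L') f' j *: col j M].
Proof.
move=> iS /(congr1 trmx); rewrite tr_col trmx_col_comb => ef.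
have spanS : spans_col S by apply/row_sub_mask_mulP; exists f.
have [T minT TS] := minset_exists spanS.
have iT : i \notin T := contra (subsetP TS i) iS.
exists T; split => //; first exact: circuit_of_minset_spans_col.
have [f' ef'] := row_sub_mask_mulP _ _ _ (minsetp minT).
by exists f'; apply: trmx_inj; rewrite tr_col trmx_col_comb.
Qed.

End Circuits.

Lemma leq_index_drop (T : eqType) (s : seq T) n x :
  uniq s -> x \in drop n s -> (n <= index x s)%N.
Proof.
move=> us xd; have : uniq (take n s ++ drop n s) by rewrite cat_take_drop.
rewrite cat_uniq => /and3P[_ /hasPn/(_ x xd) + _].
by rewrite in_take ?(mem_drop xd) // -leqNgt.
Qed.

Lemma seq_last_in_set (T : finType) (s : seq T) (L : {set T}) x0 :
  uniq s -> x0 \in L -> x0 \in s ->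
  exists2 i, i \in L & (i \in s) && (L \subset ~: [set x | x \in drop (index i s).+1 s]).
Proof.
move=> us x0L x0s; have Px0 : (x0 \in L) && (x0 \in s) by rewrite x0L.
case: (@arg_maxnP _ x0 (fun x => (x \in L) && (x \in s)) (fun x => index x s) Px0)
  => i /andP[iL si] imax.
exists i; rewrite // si; apply/subsetP => x xL; rewrite !inE; apply/negP => xd.
have := imax x; rewrite xL (mem_drop xd) => /(_ isT).
by rewrite /= leqNgt (leq_index_drop us xd).
Qed.

Section Restriction.
Variables (F : fieldType) (r m : nat).
Implicit Types (H : 'M[F]_(r, m)) (L : {set 'I_m}).

Definition top_rows k : {set 'I_r} := [set a : 'I_r | (a < k)%N].

(* [restr H k L] is [H_[k]^L] padded with zero rows and columns to size r x m. *)
Definition restr H k L := mask (top_rows k) *m H *m mask L.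

Lemma mxrank_subH H k (hk : (k <= r)%N) L :
  \rank (subH hk H L) = \rank (restr H k L).
Proof.
have -> : subH hk H L = rowsub (widen_ord hk) (colsub enum_val H).
  by apply/matrixP => a b; rewrite !mxE.
rewrite (@mxrank_rowsub_mask _ _ _ _ (top_rows k)) => [|l|a]; last 2 first.
- by rewrite inE /=.
- by rewrite inE => ak; exists (Ordinal ak); apply: val_inj.
rewrite mulmx_colsub -mxrank_tr trmx_mxsub (@mxrank_rowsub_mask _ _ _ _ L) => [|l|a aL].
- by rewrite -mxrank_tr trmx_mul trmxK trmx_mask.
- exact: enum_valP.
- by exists (enum_rank_in aL a); rewrite enum_rankK_in.
Qed.

Lemma top_rowsS (k : 'I_r) : top_rows k.+1 = k |: top_rows k.
Proof. by apply/setP => a; rewrite !inE ltnS leq_eqVlt. Qed.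

Lemma restr0 H L : restr H 0 L = 0.
Proof.
rewrite /restr; have -> : top_rows 0 = set0 by apply/setP => a; rewrite !inE.
by rewrite mask0 !mul0mx.
Qed.

Lemma restrE H k L : restr H k L = mask (top_rows k) *m (H *m mask L).
Proof. by rewrite /restr mulmxA. Qed.

Lemma mxrank_restr_tr H k L :
  \rank (restr H k L) = \rank (mask L *m (mask (top_rows k) *m H)^T).
Proof. by rewrite -mxrank_tr trmx_mul trmx_mask. Qed.

Lemma mxrank_restr_leS H k L : (\rank (restr H k L) <= \rank (restr H k.+1 L))%N.
Proof.
by rewrite !restrE mxrankS // mask_mulS //; apply/subsetP => a; rewrite !inE => /ltnW.
Qed.

Lemma mxrank_restrS_le H (k : 'I_r) L :
  (\rank (restr H k.+1 L) <= (\rank (restr H k L)).+1)%N.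
Proof. by rewrite !restrE top_rowsS mxrank_mask_setU1_le. Qed.

Lemma mxrank_restrS_ltn H (k : 'I_r) L :
  ~~ (row k (H *m mask L) <= mask (top_rows k) *m (H *m mask L))%MS ->
  (\rank (restr H k L) < \rank (restr H k.+1 L))%N.
Proof. by rewrite !restrE top_rowsS; apply: mxrank_mask_setU1_ltn. Qed.

Lemma mxrank_restr_setD1_le H k L i : i \in L ->
  (\rank (restr H k L) <= (\rank (restr H k (L :\ i))).+1)%N.
Proof. by move=> iL; rewrite !mxrank_restr_tr -{1}(setD1K iL) mxrank_mask_setU1_le. Qed.

Lemma mxrank_restr_setD1_ltn H k L i : i \in L ->
  ~~ (row i (mask (top_rows k) *m H)^T <= mask (L :\ i) *m (mask (top_rows k) *m H)^T)%MS ->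
  (\rank (restr H k (L :\ i)) < \rank (restr H k L))%N.
Proof.
move=> iL; rewrite !mxrank_restr_tr -[in X in (_ < X)%N](setD1K iL).
exact: mxrank_mask_setU1_ltn.
Qed.

Lemma restr_row_dependency H (k : 'I_r) L :
  (row k (H *m mask L) <= mask (top_rows k) *m (H *m mask L))%MS ->
  exists w : 'I_r -> F, forall j, j \in L -> H k j = \sum_(a in top_rows k) w a * H a j.
Proof.
case/row_sub_mask_mul_entries => w ew; exists w => j jL.
have := ew j; rewrite !mul_mask_mxE jL mulr1 => ->.
by apply: eq_bigr => a _; rewrite mul_mask_mxE jL mulr1.
Qed.

Lemma restr_col_dependency H k L i :
  (row i (mask (top_rows k) *m H)^T <= mask (L :\ i) *m (mask (top_rows k) *m H)^T)%MS ->
  exists f : 'I_m -> F,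
    forall a : 'I_r, (a < k)%N -> H a i = \sum_(j in L :\ i) f j * H a j.
Proof.
case/row_sub_mask_mul_entries => f ef; exists f => a ak.
have := ef a; rewrite mxE mask_mul_mxE inE ak mul1r => ->.
by apply: eq_bigr => j _; rewrite mxE mask_mul_mxE inE ak mul1r.
Qed.

Lemma vetoS H k i L1 L2 z : L1 \subset L2 -> veto H k i L1 z -> veto H k i L2 z.
Proof.
move=> sL12 [L' [sL'L1 circL' comb]]; exists L'; split=> //.
exact: subset_trans sL'L1 (setSD _ sL12).
Qed.

(* The row relation carries the column relation of the circuit down to row k,
   so its veto value is [H k i]. *)
Lemma veto_of_dependencies H (k : 'I_r) i L (w : 'I_r -> F) (f : 'I_m -> F) :
  i \in L ->
  (forall j, j \in L -> H k j = \sum_(a in top_rows k) w a * H a j) ->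
  (forall a : 'I_r, (a < k)%N -> H a i = \sum_(j in L :\ i) f j * H a j) ->
  veto H k i L (H k i).
Proof.
move=> iL rowk coli; pose M := topH (ltnW (ltn_ord k)) H.
have colM : col i M = \sum_(j in L :\ i) f j *: col j M.
  apply/matrixP => a b; rewrite !(mxE, summxE) coli; last exact: (ltn_ord a).
  by apply: eq_bigr => j _; rewrite !mxE.
have [|L' [sL' circL' [f' colM']]] := circuit_of_dependency _ colM; first by rewrite setD11.
exists L'; split=> //; exists f'; split=> //.
have coli' (a : 'I_r) : (a < k)%N -> H a i = \sum_(j in L') f' j * H a j.
  move=> ak; have wa : widen_ord (ltnW (ltn_ord k)) (Ordinal ak) = a by apply: val_inj.
  have /matrixP/(_ (Ordinal ak) 0) := colM'; rewrite !(mxE, summxE) wa => ->.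
  by apply: eq_bigr => j _; rewrite !mxE wa.
have sL'L : L' \subset L := subset_trans sL' (subD1set L i).
rewrite rowk // (eq_bigr (fun a => \sum_(j in L') w a * (f' j * H a j))) => [|a];
  last first.
  by rewrite inE => ak; rewrite coli' // mulr_sumr.
rewrite exchange_big; apply: eq_bigr => j jL'; rewrite rowk ?(subsetP sL'L) // mulr_sumr.
by apply: eq_bigr => a _; rewrite mulrCA.
Qed.

End Restriction.

Arguments top_rows {r} k.

Section MaxRank.
Variables (F : finFieldType) (r m : nat) (G : 'M[bool]_(r, m)).
Implicit Types (H : 'M[F]_(r, m)) (L : {set 'I_m}).

Definition max_rank k L :=
  (\max_(H' : 'M[F]_(r, m) | fits G H') \rank (restr H' k L))%N.

Lemma max_rank0 L : max_rank 0 L = 0%N.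
Proof. by apply/eqP; rewrite -leqn0; apply/bigmax_leqP => H' _; rewrite restr0 mxrank0. Qed.

Lemma max_rankS_le (k : 'I_r) L : (max_rank k.+1 L <= (max_rank k L).+1)%N.
Proof.
apply/bigmax_leqP => H' fitH'; apply: leq_trans (mxrank_restrS_le H' k L) _.
by rewrite ltnS (leq_bigmax_cond H').
Qed.

Lemma max_rank_setD1_le k L i : i \in L -> (max_rank k L <= (max_rank k (L :\ i)).+1)%N.
Proof.
move=> iL; apply/bigmax_leqP => H' fitH'.
apply: leq_trans (mxrank_restr_setD1_le H' k iL) _.
by rewrite ltnS (leq_bigmax_cond H').
Qed.

Lemma max_rankS_zero (k : 'I_r) L :
  (forall j, j \in L -> ~~ G k j) -> (max_rank k.+1 L <= max_rank k L)%N.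
Proof.
move=> G0; apply/bigmax_leqP => H' fitH'; apply: leq_trans _ (leq_bigmax_cond H' fitH').
rewrite !restrE top_rowsS; apply: leq_trans (mxrank_mask_setU1 _ _ k) _.
suff -> : row k (H' *m mask L) = 0 by rewrite mxrank0 addn0.
apply/rowP => j; rewrite mxE mul_mask_mxE mxE.
case: (boolP (j \in L)) => jL; last by rewrite mulr0.
by move/forallP: fitH' => /(_ k)/forallP/(_ j)/implyP/(_ (G0 j jL))/eqP->; rewrite mul0r.
Qed.

Lemma MCD_output_fits H : MCD_output G H -> fits G H.
Proof.
by case=> G0 _ _; apply/'forall_forallP => k i; apply/implyP => /negbTE/G0/eqP.
Qed.

Lemma max_rank_step H (k : 'I_r) : MCD_output G H ->
  (forall L, \rank (restr H k L) = max_rank k L) ->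
  forall L, (max_rank k.+1 L <= \rank (restr H k.+1 L))%N.
Proof.
case=> _ row0 rowsMCD IHk L; have [N] := ubnP #|L|; elim: N L => // N IHN L /ltnSE cardL.
case: (boolP [exists j in L, G k j]) => [/exists_inP[i0 i0L Gi0] | noG]; last first.
  apply: leq_trans (max_rankS_zero _) _; last by rewrite -IHk mxrank_restr_leS.
  by move=> j jL; apply: contra noG => Gj; apply/exists_inP; exists j.
case: (boolP (row k (H *m mask L) <= mask (top_rows k) *m (H *m mask L))%MS)
  => [rowk_dep | rowk_indep]; last first.
  by apply: leq_trans (max_rankS_le k L) _; rewrite -IHk mxrank_restrS_ltn.
have [w rowk] := restr_row_dependency rowk_dep.
have [k0 | kpos] := posnP k.
  have := rowk i0 i0L; rewrite row0 // k0 big_pred0 => [/eqP|a]; last by rewrite inE.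
  by rewrite oner_eq0.
have [s [us mems notveto]] := rowsMCD k kpos.
have [i iL /andP[si sLi]] := seq_last_in_set us i0L (etrans (mems i0) Gi0).
set Y := (mask (top_rows k.+1) *m H)^T.
case: (boolP (row i Y <= mask (L :\ i) *m Y)%MS) => [coli_dep | coli_indep]; last first.
  apply: leq_trans (max_rank_setD1_le _ iL) _.
  apply: leq_trans _ (mxrank_restr_setD1_ltn iL coli_indep).
  by rewrite ltnS IHN // (leq_trans _ cardL) // (cardsD1 i L) iL.
have [f coli] := restr_col_dependency coli_dep.
case: (notveto i si); apply: vetoS sLi _.
by apply: (veto_of_dependencies iL rowk) => a ak; rewrite coli // leqW.
Qed.

Lemma mxrank_restr_MCD H : MCD_output G H ->
  forall k, (k <= r)%N -> forall L, \rank (restr H k L) = max_rank k L.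
Proof.
move=> HMCD; elim=> [|k IHk] kr L; first by rewrite restr0 mxrank0 max_rank0.
apply/eqP; rewrite eqn_leq (leq_bigmax_cond H (MCD_output_fits HMCD)).
exact: (max_rank_step (k := Ordinal kr) HMCD (IHk (ltnW kr))).
Qed.

End MaxRank.

Theorem proposition5 (F : finFieldType) (r m : nat)
    (G : 'M[bool]_(r, m)) (H : 'M[F]_(r, m)) :
  (r <= m)%N ->
  ('C(m, minn m./2 r) <= #|F|)%N ->
  MCD_output G H ->
  forall (k : 'I_r) (L : {set 'I_m}),
    \rank (subH (ltn_ord k) H L) =
    (\max_(H' : 'M[F]_(r, m) | fits G H') \rank (subH (ltn_ord k) H' L))%N.
Proof.
move=> _ _ HMCD k L.
rewrite mxrank_subH (eq_bigr (fun H' => \rank (restr H' k.+1 L))) => [|H' _]; last first.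
  exact: mxrank_subH.
exact: mxrank_restr_MCD.
Qed.
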